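(* Let $P=(T;U,V)$ be a 3M-DAP with $u = v+1$. Then $f(P) > x_u - x_v$.
   Context: A three-matrix division and assignment problem (3M-DAP) $P=(T;U,V)$ is specified by integers $t,u,v$ (numbers of columns), integers $s_t, s_u, s_v$ (numbers of rows) and rationals $x_t, x_u, x_v$ (required row sums), subject to: $t \ge 2$, $u \ge 2$, $v \ge 1$; if $v = 1$ then $v s_v \le (t-2)s_t$; $s_t > 0$, $s_u > 0$, $s_v \ge 0$; $s_u u + s_v v = s_t t$; $s_u x_u + s_v x_v = s_t x_t$; and $x_u/u < x_v/v$. A feasible solution assigns real values to the entries of an $s_t\times t$ matrix $T$, an $s_u \times u$ matrix $U$ and an $s_v \times v$ matrix $V$ so that every row of $T$, $U$, $V$ sums to $x_t$, $x_u$, $x_v$ respectively, and the multiset of entries of $T$ equals the multiset union of the entries of $U$ and $V$. $f(P)$ is the maximum, over feasible solutions, of the smallest entry of $T$. *)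

From HB Require Import structures.
From mathcomp Require Import all_boot all_order all_algebra.
From mathcomp Require Import classical_sets reals.
Set Implicit Arguments. Unset Strict Implicit. Unset Printing Implicit Defensive.
Import Order.TTheory GRing.Theory Num.Theory.
Local Open Scope ring_scope.
Local Open Scope classical_set_scope.

(* Parameters of a three-matrix division and assignment problem (3M-DAP):
   column numbers t u v, row numbers st su sv, rational row sums xt xu xv. *)
Definition is_3MDAP (t u v st su sv : nat) (xt xu xv : rat) : Prop :=
  (2 <= t)%N /\ (2 <= u)%N /\ (1 <= v)%N /\
  (v = 1%N -> (v * sv <= (t - 2) * st)%N) /\
  (0 < st)%N /\ (0 < su)%N /\
  (su * u + sv * v = st * t)%N /\
  su%:R * xu + sv%:R * xv = st%:R * xt /\
  xu / u%:R < xv / v%:R.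

Definition mx_entries (R : Type) (m n : nat) (A : 'M[R]_(m, n)) : seq R :=
  [seq A i j | i <- enum 'I_m, j <- enum 'I_n].

Definition feasible (R : realType) (t u v st su sv : nat) (xt xu xv : rat)
  (T : 'M[R]_(st, t)) (U : 'M[R]_(su, u)) (V : 'M[R]_(sv, v)) : Prop :=
  [/\ forall i, \sum_j T i j = ratr xt,
      forall i, \sum_j U i j = ratr xu,
      forall i, \sum_j V i j = ratr xv &
      perm_eq (mx_entries T) (mx_entries U ++ mx_entries V)].

Definition min_entry_values (R : realType) (t u v st su sv : nat)
  (xt xu xv : rat) : set R :=
  [set y | exists (T : 'M[R]_(st, t)) (U : 'M[R]_(su, u)) (V : 'M[R]_(sv, v)),
     feasible xt xu xv T U V /\ (exists i j, T i j = y) /\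
     (forall i j, y <= T i j)].

Arguments min_entry_values R t u v st su sv xt xu xv : clear implicits.

Definition f_dap (R : realType) (t u v st su sv : nat) (xt xu xv : rat) : R :=
  sup (min_entry_values R t u v st su sv xt xu xv).
Arguments f_dap R t u v st su sv xt xu xv : clear implicits.

From mathcomp Require Import all_boot all_order all_algebra.
From mathcomp Require Import classical_sets reals.
From mathcomp Require Import zify ring.
Set Implicit Arguments. Unset Strict Implicit. Unset Printing Implicit Defensive.
Import Order.TTheory GRing.Theory Num.Theory.

(* Write every entry as [(xu - xv) + g w] with [g = u xv - v xu > 0].  The row
   conditions of U and V become "the rows sum to 1", so it suffices to solve this
   normalised problem with all entries [w] of T positive; after scaling by a common
   denominator it is a problem about positive integers.
   Integer solutions come from overlaying two partitions of a segment: consecutive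
   intervals for the rows of T against consecutive intervals for the rows of U and V.
   The positive overlaps, padded with zeros to the required number of entries and all
   shifted by some [e > 0], are the entries; the lengths are chosen so that no interval
   meets more intervals of the other partition than its row has entries.  For [v = 1]
   the one-entry rows of V are instead placed whole inside the rows of T. *)

(** * Counting crossings of interval partitions *)

Lemma count_sumE (T : Type) (P : pred T) (s : seq T) :
  count P s = \sum_(x <- s) (P x : nat).
Proof. by elim: s => [|x s IH]; rewrite ?big_nil ?big_cons //= IH. Qed.

Lemma perm_allpairs_swap (T : eqType) (f : nat -> nat -> T) (s r : seq nat) :
  perm_eq [seq f i j | i <- s, j <- r] [seq f i j | j <- r, i <- s].
Proof.
apply/permP => a; rewrite !count_flatten -!map_comp !sumnE !big_map.
under eq_bigr => i _ do rewrite /= count_sumE big_map.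
under [RHS]eq_bigr => j _ do rewrite /= count_sumE big_map.
exact: exchange_big.
Qed.

Lemma perm_flatten_cat (T : eqType) (F G : nat -> seq T) (s : seq nat) :
  perm_eq (flatten [seq F i ++ G i | i <- s])
          (flatten [seq F i | i <- s] ++ flatten [seq G i | i <- s]).
Proof.
elim: s => [|a s IH] //=.
by rewrite perm_sym perm_catACA perm_sym perm_cat2l.
Qed.

Lemma flatten_nseq (T : Type) (x : T) (g : nat -> nat) (s : seq nat) :
  flatten [seq nseq (g i) x | i <- s] = nseq (\sum_(i <- s) g i) x.
Proof. by elim: s => [|a s IH]; rewrite ?big_nil ?big_cons //= IH nseqD. Qed.

Lemma iota0E n : iota 0 n = index_iota 0 n.
Proof. by rewrite /index_iota subn0. Qed.

Lemma sumn_map_addn e (s : seq nat) : sumn (map (addn e) s) = size s * e + sumn s.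
Proof. by elim: s => //= x s ->; rewrite mulSn; lia. Qed.

Lemma sumn_filter_gt0 (F : nat -> nat) (s : seq nat) :
  sumn [seq F j | j <- s & 0 < F j] = \sum_(j <- s) F j.
Proof.
elim: s => [|a s IH]; rewrite ?big_nil ?big_cons //=.
by case: ifP => /= [_|]; rewrite IH //; rewrite lt0n => /negbFE /eqP ->.
Qed.

Lemma sum_nat_subn n (f g : nat -> nat) : (forall i, i < n -> f i <= g i) ->
  \sum_(0 <= i < n) (g i - f i) = \sum_(0 <= i < n) g i - \sum_(0 <= i < n) f i.
Proof.
move=> H; rewrite -[X in _ = X - _](eq_big_nat _ _ (F1 := fun i => g i - f i + f i)).
  by rewrite big_split /= addnK.
by move=> i /andP [_ ilt]; rewrite subnK ?H.
Qed.

Section IncreasingSequences.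
Variables (f : nat -> nat) (n : nat).

Lemma leq_nondecreasing_in : (forall j, j < n -> f j <= f j.+1) ->
  forall a b, a <= b -> b <= n -> f a <= f b.
Proof.
move=> H a b ab bn; elim: b ab bn => [|b IH]; first by rewrite leqn0 => /eqP ->.
rewrite leq_eqVlt => /orP [/eqP -> //| ab] bn.
exact: leq_trans (IH ab (ltnW bn)) (H _ bn).
Qed.

Lemma leq_spaced_in sig : (forall j, j < n -> f j + sig <= f j.+1) ->
  forall a k, a + k <= n -> f a + k * sig <= f (a + k).
Proof.
move=> H a; elim=> [|k IH] akn; first by rewrite addn0 mul0n addn0.
have := IH ltac:(lia).
have := H (a + k); rewrite addnS in akn * => /(_ akn); rewrite mulSn; lia.
Qed.

End IncreasingSequences.

(* [crosses f lo hi j]: the [j]-th interval [[f j, f j.+1]] of the partition with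
   breakpoints [f] overlaps [(lo, hi)] in positive length. *)
Definition crosses (f : nat -> nat) lo hi j := (f j < hi) && (lo < f j.+1).

Lemma count_iota_le_spread (P : pred nat) n m :
  (forall j1 j2, j1 < j2 -> j2 < n -> P j1 -> P j2 -> j2 - j1 <= m) ->
  count P (iota 0 n) <= m.+1.
Proof.
move=> H; rewrite -size_filter.
case E: (filter P (iota 0 n)) => [|h s] //=.
have srt : sorted ltn (h :: s).
  by rewrite -E; apply: (sorted_filter ltn_trans); exact: iota_ltn_sorted.
have un : uniq (h :: s) by rewrite -E; apply: filter_uniq; exact: iota_uniq.
have memE x : x \in h :: s -> P x /\ x < n.
  by rewrite -E mem_filter mem_iota => /andP [Px /andP [_ xn]].
suff : size (h :: s) <= size (iota h m.+1) by rewrite size_iota.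
apply: uniq_leq_size => // x xs; rewrite mem_iota.
have [Ph _] := memE h (mem_head _ _); have [Px xn] := memE x xs.
move: xs; rewrite inE => /orP [/eqP ->|xs]; first by lia.
have hx : h < x by move/allP: (order_path_min ltn_trans srt) => /(_ x xs).
have := H h x hx xn Ph Px; lia.
Qed.

Lemma count_crosses_spaced (f : nat -> nat) n sig lo hi m :
  (forall j, j < n -> f j + sig <= f j.+1) -> hi - lo <= m * sig ->
  count (crosses f lo hi) (iota 0 n) <= m.+1.
Proof.
move=> H hl; apply: count_iota_le_spread => j1 j2 j12 j2n /andP [_ h1] /andP [h2 _].
have := leq_spaced_in H (a := j1.+1) (k := j2 - j1.+1); rewrite subnKC // => /(_ (ltnW j2n)) g.
have : (j2 - j1.+1) * sig < m * sig by lia.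
rewrite ltn_mul2r => /andP [_]; lia.
Qed.

Lemma count_crosses_no_inside (f : nat -> nat) n lo hi :
  (forall j, j < n -> f j < f j.+1) ->
  (forall i, i < n -> ~~ ((lo < f i) && (f i.+1 < hi))) ->
  count (crosses f lo hi) (iota 0 n) <= 2.
Proof.
move=> H N; apply: count_iota_le_spread => j1 j2 j12 j2n /andP [_ h1] /andP [h2 _].
rewrite leqNgt; apply/negP => d2.
have mono := leq_nondecreasing_in (fun j jn => ltnW (H j jn)).
have := N j1.+1 ltac:(lia); rewrite h1 /=.
have := mono j1.+2 j2 ltac:(lia) (ltnW j2n); lia.
Qed.

Lemma not_inside_of_grid al lo hi g j : lo <= g * al <= hi ->
  ~~ ((j * al < lo) && (hi < j.+1 * al)).
Proof.
move=> /andP [lo_g g_hi]; apply/negP => /andP [j_lo hi_j].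
have := leq_ltn_trans g_hi hi_j; have := leq_trans j_lo lo_g.
by rewrite !ltn_mul2r => /andP [_ jg] /andP [_]; rewrite ltnS leqNgt jg.
Qed.

Lemma exists_grid_point p a b i : p.+1 * a = p * b -> exists g, i * a <= g * b <= i.+1 * a.
Proof.
move=> h; exists ((i %/ p.+1) * p + i %% p.+1).
have lt_mod := ltn_pmod i (ltn0Sn p); have i_E := divn_eq i p.+1.
apply/andP; split.
- rewrite -(leq_pmul2l (ltn0Sn p)) mulnCA h [p.+1 * (_ * b)]mulnA [i * _]mulnA.
  by apply: leq_mul => //; rewrite i_E; lia.
- rewrite -(leq_pmul2l (ltn0Sn p)) [X in _ <= X]mulnCA h [p.+1 * (_ * b)]mulnA [i.+1 * _]mulnA.
  by apply: leq_mul => //; rewrite i_E; lia.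
Qed.

Lemma exists_mul_window d K : 0 < d -> d < K -> exists2 m, 0 < m & m * d < K <= m.+1 * d.
Proof.
move=> d0 dK; exists ((K - 1) %/ d); first by rewrite divn_gt0 //; lia.
have := leq_divM (K - 1) d; have := ltn_ceil (K - 1) d0; lia.
Qed.

(** * The common refinement of two partitions *)

Definition overlap a1 a2 b1 b2 := minn a2 b2 - maxn a1 b1.

Lemma overlapC a1 a2 b1 b2 : overlap a1 a2 b1 b2 = overlap b1 b2 a1 a2.
Proof. by rewrite /overlap minnC maxnC. Qed.

Lemma sum_overlap (a1 a2 : nat) (B : nat -> nat) n :
  (forall j, j < n -> B j <= B j.+1) -> a1 <= a2 ->
  \sum_(0 <= j < n) overlap a1 a2 (B j) (B j.+1) = minn a2 (B n) - maxn a1 (B 0).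
Proof.
move=> H a12; elim: n H => [|n IH] H; first by rewrite big_geq //; lia.
rewrite big_nat_recr //= IH => [|j jn]; last by apply: H; lia.
have := leq_nondecreasing_in H (leq0n n) (leqnSn n).
have := H n (leqnn _); rewrite /overlap; lia.
Qed.

Section Overlay.
Variables (p q : nat) (A B kA kB : nat -> nat).
Hypotheses (incA : forall i, i < p -> A i < A i.+1)
           (incB : forall j, j < q -> B j < B j.+1)
           (A0 : A 0 = 0) (B0 : B 0 = 0) (ApBq : A p = B q).
Hypotheses (crossA : forall i, i < p -> count (crosses B (A i) (A i.+1)) (iota 0 q) <= kA i)
           (crossB : forall j, j < q -> count (crosses A (B j) (B j.+1)) (iota 0 p) <= kB j)
           (sum_kAB : \sum_(0 <= i < p) kA i = \sum_(0 <= j < q) kB j).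

Let piece i j := overlap (A i) (A i.+1) (B j) (B j.+1).
Let nA i := count (fun j => 0 < piece i j) (iota 0 q).
Let nB j := count (fun i => 0 < piece i j) (iota 0 p).
Let rowA i := [seq piece i j | j <- iota 0 q & 0 < piece i j] ++ nseq (kA i - nA i) 0.
Let rowB j := [seq piece i j | i <- iota 0 p & 0 < piece i j] ++ nseq (kB j - nB j) 0.

Let piece_gt0 i j : i < p -> j < q -> (0 < piece i j) = (B j < A i.+1) && (A i < B j.+1).
Proof.
move=> ip jq; have := incA ip; have := incB jq; rewrite /piece /overlap.
case: (ltnP (B j) (A i.+1)); case: (ltnP (A i) (B j.+1)) => /=; lia.
Qed.

Let nA_le i : i < p -> nA i <= kA i.
Proof.
move=> ip; apply: leq_trans (crossA ip); apply/eq_leq/eq_in_count => j.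
by rewrite mem_iota add0n => /andP [_ jq]; rewrite piece_gt0.
Qed.

Let nB_le j : j < q -> nB j <= kB j.
Proof.
move=> jq; apply: leq_trans (crossB jq); apply/eq_leq/eq_in_count => i.
by rewrite mem_iota add0n => /andP [_ ip]; rewrite piece_gt0 // /crosses andbC.
Qed.

Let size_rowA i : i < p -> size (rowA i) = kA i.
Proof. by move=> ip; rewrite size_cat size_nseq size_map size_filter subnKC ?nA_le. Qed.

Let size_rowB j : j < q -> size (rowB j) = kB j.
Proof. by move=> jq; rewrite size_cat size_nseq size_map size_filter subnKC ?nB_le. Qed.

Let sumn_rowA i : i < p -> sumn (rowA i) = A i.+1 - A i.
Proof.
move=> ip; rewrite sumn_cat sumn_nseq mul0n addn0 sumn_filter_gt0.
rewrite iota0E sum_overlap; last 2 first.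
- by move=> j jq; exact: ltnW (incB jq).
- exact: ltnW (incA ip).
have := leq_nondecreasing_in (fun j jp => ltnW (incA jp)) ip (leqnn p).
rewrite -ApBq B0; lia.
Qed.

Let sumn_rowB j : j < q -> sumn (rowB j) = B j.+1 - B j.
Proof.
move=> jq; rewrite sumn_cat sumn_nseq mul0n addn0 sumn_filter_gt0.
under eq_bigr => i _ do rewrite /piece overlapC.
rewrite iota0E sum_overlap; last 2 first.
- by move=> i ip; exact: ltnW (incA ip).
- exact: ltnW (incB jq).
have := leq_nondecreasing_in (fun j jq => ltnW (incB jq)) jq (leqnn q).
rewrite ApBq A0; lia.
Qed.

Let positive_pieces_perm :
  perm_eq (flatten [seq [seq piece i j | j <- iota 0 q & 0 < piece i j] | i <- iota 0 p])
          (flatten [seq [seq piece i j | i <- iota 0 p & 0 < piece i j] | j <- iota 0 q]).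
Proof.
have filter_pairs (r s : seq nat) (F : nat -> nat -> nat) :
    flatten [seq [seq F i j | j <- s & 0 < F i j] | i <- r] =
    filter (leq 1) [seq F i j | i <- r, j <- s].
  by rewrite filter_flatten -map_comp; congr flatten; apply: eq_map => i /=; rewrite filter_map.
rewrite (filter_pairs _ _ piece) (filter_pairs _ _ (fun j i => piece i j)).
exact/perm_filter/perm_allpairs_swap.
Qed.

Let perm_rows :
  perm_eq (flatten [seq rowA i | i <- iota 0 p]) (flatten [seq rowB j | j <- iota 0 q]).
Proof.
apply: perm_trans (perm_flatten_cat _ _ _) _.
rewrite perm_sym; apply: perm_trans (perm_flatten_cat _ _ _) _; rewrite perm_sym.
have sum_nAB : \sum_(i <- iota 0 p) nA i = \sum_(j <- iota 0 q) nB j.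
  have := perm_size positive_pieces_perm; rewrite !size_flatten /shape -!map_comp.
  by rewrite !sumnE !big_map; under eq_bigr do rewrite /= size_map size_filter;
    under [RHS]eq_bigr do rewrite /= size_map size_filter.
have zeros : \sum_(i <- iota 0 p) (kA i - nA i) = \sum_(j <- iota 0 q) (kB j - nB j).
  move: sum_nAB; rewrite !iota0E !sum_nat_subn => [-> | j /nB_le | i /nA_le] //.
  by rewrite sum_kAB.
by rewrite !flatten_nseq zeros perm_cat2r.
Qed.

(* Row [i] of [A] gets its positive overlaps with the [B]-intervals, padded with zeros
   to [kA i] entries, and symmetrically for [B]; both sides then list the same positive
   overlaps and, by [sum_kAB], the same number of zeros.  The shift by [e] makes all
   entries positive. *)
Lemma padded_overlay e : 0 < e -> exists LA LB : nat -> seq nat,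
  [/\ forall i, i < p -> [/\ size (LA i) = kA i, sumn (LA i) = kA i * e + (A i.+1 - A i)
                           & all (fun x => 0 < x) (LA i)],
      forall j, j < q -> size (LB j) = kB j /\ sumn (LB j) = kB j * e + (B j.+1 - B j) &
      perm_eq (flatten [seq LA i | i <- iota 0 p]) (flatten [seq LB j | j <- iota 0 q])].
Proof.
move=> e0; exists (fun i => map (addn e) (rowA i)), (fun j => map (addn e) (rowB j)); split.
- move=> i ip; rewrite size_map sumn_map_addn size_rowA // sumn_rowA //; split => //.
  by apply/allP => x /mapP [y _ ->]; rewrite addn_gt0 e0.
- by move=> j jq; rewrite size_map sumn_map_addn size_rowB // sumn_rowB.
- have shift (G : nat -> seq nat) r :
    flatten [seq map (addn e) (G i) | i <- r] = map (addn e) (flatten [seq G i | i <- r]).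
    by rewrite map_flatten -map_comp.
  by rewrite !shift; apply: perm_map.
Qed.

End Overlay.

(** * Integer solutions for [v >= 2] *)

(* Integer solution of the problem normalised so that the rows of U and V sum to D;
   the entries of T are positive. *)
Definition nat_solution (t v st su sv D : nat) (TT UU VV : nat -> seq nat) :=
  [/\ 0 < D,
      forall i, i < st -> [/\ size (TT i) = t, sumn (TT i) * st = (su + sv) * D
                            & all (fun x => 0 < x) (TT i)],
      forall j, j < su -> size (UU j) = v.+1 /\ sumn (UU j) = D,
      forall j, j < sv -> size (VV j) = v /\ sumn (VV j) = D &
      perm_eq (flatten [seq TT i | i <- iota 0 st])
              (flatten [seq UU j | j <- iota 0 su] ++ flatten [seq VV j | j <- iota 0 sv])].

Definition two_block s1 l1 l2 j := minn j s1 * l1 + (j - s1) * l2.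

Lemma two_blockS s1 l1 l2 j :
  two_block s1 l1 l2 j.+1 = two_block s1 l1 l2 j + (if j < s1 then l1 else l2).
Proof.
rewrite /two_block; case: ltnP => h.
- have -> : minn j.+1 s1 = j.+1 by lia.
  have [-> ->] : j.+1 - s1 = 0 /\ j - s1 = 0 by lia.
  by rewrite mulSn; lia.
- have -> : minn j.+1 s1 = s1 by lia.
  by rewrite subSn // mulSn; lia.
Qed.

Lemma two_block_small s1 l1 l2 j : j <= s1 -> two_block s1 l1 l2 j = j * l1.
Proof. by rewrite /two_block => h; rewrite (minn_idPl h); lia. Qed.

Lemma two_block_layout st t tau s1 l1 c1 s2 l2 c2 e D :
  0 < tau -> 0 < l1 -> 0 < l2 -> 0 < e -> c1 * e + l1 = D -> c2 * e + l2 = D ->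
  st * tau = s1 * l1 + s2 * l2 -> st * t = s1 * c1 + s2 * c2 ->
  (forall i, i < st ->
     count (crosses (two_block s1 l1 l2) (i * tau) (i.+1 * tau)) (iota 0 (s1 + s2)) <= t) ->
  (forall j, j < s1 + s2 ->
     count (crosses (muln^~ tau) (two_block s1 l1 l2 j) (two_block s1 l1 l2 j.+1)) (iota 0 st)
       <= (if j < s1 then c1 else c2)) ->
  exists TT G1 G2 : nat -> seq nat,
    [/\ forall i, i < st -> [/\ size (TT i) = t, sumn (TT i) * st = (s1 + s2) * D
                              & all (fun x => 0 < x) (TT i)],
        forall j, j < s1 -> size (G1 j) = c1 /\ sumn (G1 j) = D,
        forall j, j < s2 -> size (G2 j) = c2 /\ sumn (G2 j) = D &
        perm_eq (flatten [seq TT i | i <- iota 0 st])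
                (flatten [seq G1 j | j <- iota 0 s1] ++ flatten [seq G2 j | j <- iota 0 s2])].
Proof.
move=> tau0 l10 l20 e0 D1 D2 hlen hcnt crossT crossB.
set Bs := two_block s1 l1 l2; set kB := fun j => if j < s1 then c1 else c2.
have incA i : i < st -> i * tau < i.+1 * tau by rewrite mulSn; lia.
have incB j : j < s1 + s2 -> Bs j < Bs j.+1 by rewrite /Bs two_blockS; case: ifP; lia.
have B0 : Bs 0 = 0 by rewrite /Bs /two_block; lia.
have AB : st * tau = Bs (s1 + s2) by rewrite /Bs /two_block hlen; lia.
have sum_k : \sum_(0 <= i < st) t = \sum_(0 <= j < s1 + s2) kB j.
  rewrite sum_nat_const_nat (big_cat_nat _ (leq_addr s2 s1)) //=.
  rewrite (@eq_big_nat _ _ _ 0 s1 _ (fun=> c1)) => [|j /andP [_ js]]; last by rewrite /kB js.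
  rewrite (@eq_big_nat _ _ _ s1 _ _ (fun=> c2)) => [|j /andP [js _]]; last by rewrite /kB ltnNge js.
  rewrite !sum_nat_const_nat; lia.
have [LA [LB [rowT rowB perm]]] := padded_overlay incA incB (erefl 0) B0 AB crossT crossB sum_k e0.
exists LA, LB, (fun j => LB (s1 + j)); split.
- move=> i ip; have [s ss sp] := rowT i ip; split => //.
  rewrite ss mulSn addnK (_ : _ * st = st * t * e + st * tau); last by ring.
  by rewrite hcnt hlen -D1; lia.
- by move=> j js; have [s ss] := rowB j (ltn_addr s2 js); rewrite /kB js in s ss;
    rewrite s ss /Bs two_blockS js addKn.
- move=> j js; have jq : s1 + j < s1 + s2 by rewrite ltn_add2l.
  have [s ss] := rowB _ jq; have nj : (s1 + j < s1) = false by rewrite ltnNge leq_addr.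
  by rewrite /kB nj in s ss; rewrite s ss /Bs two_blockS nj addKn.
- by move: perm; rewrite iotaD map_cat flatten_cat add0n -{2}[s1]addn0 iotaDl -map_comp.
Qed.

Lemma nat_solution_of_lengths t v st su sv e tau al be D :
  0 < v -> 0 < t -> 0 < e -> 0 < tau -> 0 < al -> al <= be ->
  v.+1 * e + al = D -> v * e + be = D ->
  st * tau = su * al + sv * be -> st * t = su * v.+1 + sv * v ->
  tau <= (t - 1) * al -> al <= v * tau -> (0 < sv -> be <= (v - 1) * tau) ->
  exists TT UU VV, nat_solution t v st su sv D TT UU VV.
Proof.
move=> v0 t0 e0 tau0 al0 al_be DU DV hlen cnt tau_le al_le be_le.
have step i : i < st -> i * tau + tau <= i.+1 * tau by rewrite mulSn addnC.
have crossT i : i < st ->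
    count (crosses (two_block su al be) (i * tau) (i.+1 * tau)) (iota 0 (su + sv)) <= t.
  move=> _; apply: leq_trans (count_crosses_spaced (m := t - 1) (sig := al) _ _) _.
  - by move=> j _; rewrite two_blockS; case: ifP => _; rewrite leq_add2l.
  - by rewrite mulSn addnK.
  - by rewrite subn1 prednK.
have crossB j : j < su + sv ->
    count (crosses (muln^~ tau) (two_block su al be j) (two_block su al be j.+1)) (iota 0 st)
      <= (if j < su then v.+1 else v).
  move=> jq; case: ifP => js.
  - by apply: count_crosses_spaced step _; rewrite two_blockS js addKn.
  - apply: leq_trans (count_crosses_spaced (m := v - 1) step _) _; last by rewrite subn1 prednK.
    by rewrite two_blockS js addKn be_le //; lia.
have [TT [G1 [G2 [rowT rowU rowV perm]]]] :=
  two_block_layout tau0 al0 (leq_trans al0 al_be) e0 DU DV hlen cnt crossT crossB.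
by exists TT, G1, G2; split; rewrite // -DU addn_gt0 al0 orbT.
Qed.

Lemma leq_scaled a b c x M : a < b -> c <= M -> a * M - x <= b * M - c.
Proof.
move=> ab cM; have : a.+1 * M <= b * M by rewrite leq_mul2r ab orbT.
rewrite mulSn; lia.
Qed.

Lemma spread_row_counts t v st su sv :
  2 <= t -> 2 <= v -> 0 < su -> su * v.+1 + sv * v = st * t ->
  [/\ su + sv < (t - 1) * st, st < v * (su + sv)
    & 0 < sv -> (3 <= v) || (3 <= t) -> st < (v - 1) * (su + sv)].
Proof.
move=> t2 v2 su0 cnt.
have st_t : 2 * st <= st * t by nia.
have K_v : su * v.+1 + sv * v <= (su + sv) * v.+1 by nia.
split.
- have : 3 * su <= su * v.+1 by nia.
  have : 2 * sv <= sv * v by nia.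
  have : st * t <= 2 * ((t - 1) * st) by nia.
  lia.
- have : (su + sv) * v.+1 < 2 * (v * (su + sv)) by nia.
  lia.
- move=> sv0 /orP h3; have : su * v.+1 + sv * v < (su + sv) * v.+1 by nia.
  case: h3 => [v3|t3].
  + have : (su + sv) * v.+1 <= 2 * ((v - 1) * (su + sv)) by nia.
    lia.
  + have : 3 * st <= st * t by nia.
    have : (su + sv) * v.+1 <= 3 * ((v - 1) * (su + sv)) by nia.
    lia.
Qed.

Lemma nat_solution_spread t v st su sv :
  2 <= t -> 2 <= v -> 0 < st -> 0 < su -> su * v.+1 + sv * v = st * t ->
  [|| sv == 0, 3 <= v | 3 <= t] ->
  exists D TT UU VV, nat_solution t v st su sv D TT UU VV.
Proof.
move=> t2 v2 st0 su0 cnt hc.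
have [K_lt st_lt st_lt'] := spread_row_counts t2 v2 su0 cnt.
set K := su + sv in K_lt st_lt st_lt'.
(* [M] is large enough to absorb the corrections of order [t] and [v] below. *)
set M := t.+1 * v.+1; set D := st * M.
have M_ge c d : c <= t -> d <= v.+1 -> c * d <= M by move=> ct dv; rewrite /M leq_mul // ltnW.
have vD : v.+1 < D.
  have := M_ge 2 v.+1 t2 (leqnn _); have : M <= D by rewrite leq_pmull.
  lia.
have tM : t < K * M.
  have := M_ge t 2 (leqnn t) (ltnW v2); have : M <= K * M by rewrite leq_pmull // addn_gt0 su0.
  lia.
have hlen : st * (K * M - t) = su * (D - v.+1) + sv * (D - v).
  have : su * v.+1 <= su * D by rewrite leq_mul2l (ltnW vD) orbT.
  have : sv * v <= sv * D by rewrite leq_mul2l (ltnW (ltnW vD)) orbT.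
  rewrite !mulnBr (_ : st * (K * M) = su * D + sv * D); last by rewrite /D /K; ring.
  by move: cnt; lia.
have tau_le : K * M - t <= (t - 1) * (D - v.+1).
  by rewrite /D mulnBr mulnA; apply: leq_scaled K_lt (M_ge _ _ (leq_subr 1 t) (leqnn _)).
have al_le : D - v.+1 <= v * (K * M - t).
  by rewrite /D mulnBr mulnA; apply: leq_scaled st_lt _; rewrite mulnC M_ge // ltnW.
have be_le : 0 < sv -> D - v <= (v - 1) * (K * M - t).
  move=> sv0; rewrite /D mulnBr mulnA; apply: leq_scaled (st_lt' sv0 _) _.
  - by move: hc; rewrite eqn0Ngt sv0.
  - by rewrite mulnC M_ge // leqW // leq_subr.
by exists D; apply: (nat_solution_of_lengths (e := 1) _ _ _ _ _ _ _ _ hlen _ tau_le al_le be_le);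
  lia.
Qed.

Lemma aligned_not_inside m be tau i j : 0 < m -> 0 < tau -> m * be = m.+1 * tau ->
  ~~ ((j * be < i * tau) && (i.+1 * tau < j.+1 * be)).
Proof.
move=> m0 tau0 h; apply/negP => /andP [h1 h2].
have a1 : j * m.+1 * tau < m * i * tau.
  by rewrite -mulnA -h mulnCA -!mulnA ltn_pmul2l.
have a2 : m * i.+1 * tau < j.+1 * m.+1 * tau.
  by rewrite -[X in _ < X]mulnA -h [X in _ < X]mulnCA -!mulnA ltn_pmul2l.
rewrite ltn_pmul2r // in a1; rewrite ltn_pmul2r // in a2.
by move: a1 a2; rewrite !mulnS !mulSn; lia.
Qed.

Lemma realign_blocks m st K e : m * (st - K) + e = K -> K <= st ->
  m * (2 * st - 2 * e) = m.+1 * (2 * K - 2 * e).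
Proof.
move=> h Kst; have eK : e <= K by lia.
have est : e <= st by lia.
rewrite mulnBr in h; rewrite !mulnBr.
have : m * K <= m * st by rewrite leq_mul2l Kst orbT.
have : m.+1 * (2 * e) <= m.+1 * (2 * K) by rewrite leq_mul2l leq_mul2l eK !orbT.
have : m * (2 * e) <= m * (2 * st) by rewrite leq_mul2l leq_mul2l est !orbT.
have -> : m.+1 * (2 * K) = 2 * (m * K) + 2 * K by rewrite mulSn; ring.
have -> : m.+1 * (2 * e) = 2 * (m * e) + 2 * e by rewrite mulSn; ring.
have -> : m * (2 * st) = 2 * (m * st) by ring.
have -> : m * (2 * e) = 2 * (m * e) by ring.
lia.
Qed.

Lemma t2_v2_total_length st su sv e : su * 3 + sv * 2 = st * 2 -> 3 * e <= 2 * st ->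
  st * (2 * (su + sv) - 2 * e) = sv * (2 * st - 2 * e) + su * (2 * st - 3 * e).
Proof.
move=> cnt e3; rewrite !mulnBr.
have : st * (2 * e) = sv * (2 * e) + su * (3 * e) by rewrite !mulnA -mulnDl addnC cnt.
have : st * (2 * (su + sv)) = sv * (2 * st) + su * (2 * st) by ring.
have : sv * (2 * e) <= sv * (2 * st) by rewrite leq_mul2l; apply/orP; right; lia.
have : su * (3 * e) <= su * (2 * st) by rewrite leq_mul2l e3 orbT.
lia.
Qed.

Lemma t2_v2_lengths st su sv : 0 < su -> 0 < sv -> su * 3 + sv * 2 = st * 2 ->
  exists e m, [/\ 0 < e, 0 < m, e < su + sv,
    2 * (su + sv) - 2 * e <= 2 * st - 3 * e <= 2 * (2 * (su + sv) - 2 * e)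
  & m * (2 * st - 2 * e) = m.+1 * (2 * (su + sv) - 2 * e)].
Proof.
move=> su0 sv0 cnt; set K := su + sv.
have [m m0 /andP [mlo mhi]] : exists2 m, 0 < m & m * (st - K) < K <= m.+1 * (st - K).
  by apply: exists_mul_window; rewrite /K; lia.
have dK0 : 0 < m * (st - K) by rewrite muln_gt0 m0 subn_gt0 /K; lia.
(* [e = m.+1 * K - m * st] makes the T-intervals and the V-blocks realign after
   every [m] V-blocks. *)
exists (K - m * (st - K)), m; split => //.
- by rewrite subn_gt0.
- by lia.
- by apply/andP; split; move: mhi; rewrite mulSn /K; lia.
- by apply: realign_blocks; rewrite ?subnK // /K; lia.
Qed.

Lemma nat_solution_t2_v2 st su sv :
  0 < su -> 0 < sv -> su * 3 + sv * 2 = st * 2 ->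
  exists D TT UU VV, nat_solution 2 2 st su sv D TT UU VV.
Proof.
move=> su0 sv0 cnt.
have [e [m [e0 m0 eK /andP [tau_al al_tau] align]]] := t2_v2_lengths su0 sv0 cnt.
set K := su + sv in eK tau_al al_tau align.
set tau := 2 * K - 2 * e in tau_al al_tau align.
set al := 2 * st - 3 * e in tau_al al_tau; set be := 2 * st - 2 * e in align.
have tau0 : 0 < tau by rewrite /tau; lia.
have al0 : 0 < al := leq_trans tau0 tau_al.
have be0 : 0 < be by rewrite /be; move: al0; rewrite /al; lia.
have hlen : st * tau = sv * be + su * al.
  by apply: t2_v2_total_length; rewrite // /al in al0; lia.
(* The V-blocks come first, so that they start at 0 like the T-intervals. *)
have crossT i : i < st ->
    count (crosses (two_block sv be al) (i * tau) (i.+1 * tau)) (iota 0 (sv + su)) <= 2.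
  move=> _; apply: (count_crosses_spaced (m := 1) (sig := al)).
  - by move=> j _; rewrite two_blockS; case: ifP => _; rewrite /be /al; lia.
  - by rewrite mulSn addnK mul1n.
have crossB j : j < sv + su ->
    count (crosses (muln^~ tau) (two_block sv be al j) (two_block sv be al j.+1)) (iota 0 st)
      <= (if j < sv then 2 else 3).
  move=> _; have step i : i < st -> i * tau + tau <= i.+1 * tau by rewrite mulSn addnC.
  case: ifP => js.
  - apply: count_crosses_no_inside => i _.
      by rewrite mulSn -[X in X < _]add0n ltn_add2r.
    rewrite !two_block_small ?(ltnW js) //; exact: aligned_not_inside i j m0 tau0 align.
  - by apply: count_crosses_spaced step _; rewrite two_blockS js addKn.
have D_V : 2 * e + be = 2 * st by rewrite /be; move: al0; rewrite /al; lia.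
have D_U : 3 * e + al = 2 * st by rewrite /al; move: al0; rewrite /al; lia.
have cnt' : st * 2 = sv * 2 + su * 3 by rewrite -cnt addnC.
have [TT [G1 [G2 [rowT rowV rowU perm]]]] :=
  two_block_layout tau0 be0 al0 e0 D_V D_U hlen cnt' crossT crossB.
exists (2 * st), TT, G2, G1; split => //; first by move: al0; rewrite /al; lia.
- by move=> i /rowT [? ? ?]; rewrite addnC.
- by rewrite perm_sym perm_catC perm_sym.
Qed.

(** * Integer solutions for [v = 1] *)

Definition cumsum (R : nat -> nat) i := \sum_(0 <= l < i) R l.

Lemma cumsumS R i : cumsum R i.+1 = cumsum R i + R i.
Proof. by rewrite /cumsum big_nat_recr. Qed.

Lemma cumsum_const (R : nat -> nat) c i : (forall l, l < i -> R l = c) -> cumsum R i = i * c.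
Proof.
by move=> H; rewrite /cumsum (eq_big_nat _ _ (F2 := fun=> c)) ?sum_nat_const_nat ?subn0
  // => l /andP [_ /H].
Qed.

(* The [n i] one-entry rows of V assigned to row [i] of T fill a length [n i * (e + al)]
   of it; the remaining lengths [R i] are laid end to end against the U-blocks of
   length [al]. *)
Section OneEntryRows.
Variables (t st su sv e al tau : nat) (n R : nat -> nat).
Hypotheses (e0 : 0 < e) (al0 : 0 < al)
  (n_lt : forall i, i < st -> n i < t) (sum_n : \sum_(0 <= i < st) n i = sv)
  (cnt : st * t = su * 2 + sv)
  (R_gt0 : forall i, i < st -> 0 < R i)
  (R_tau : forall i, i < st -> R i + n i * (e + al) = tau)
  (R_le : forall i, i < st -> R i <= (t - n i - 1) * al)
  (R_total : cumsum R st = su * al)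
  (R_not_inside : forall i j, i < st ->
     ~~ ((j * al < cumsum R i) && (cumsum R i.+1 < j.+1 * al))).

Let leftover_overlay : exists LA LB : nat -> seq nat,
  [/\ forall i, i < st -> [/\ size (LA i) = t - n i, sumn (LA i) = (t - n i) * e + R i
                            & all (fun x => 0 < x) (LA i)],
      forall j, j < su -> size (LB j) = 2 /\ sumn (LB j) = 2 * e + al &
      perm_eq (flatten [seq LA i | i <- iota 0 st]) (flatten [seq LB j | j <- iota 0 su])].
Proof.
have incA i : i < st -> cumsum R i < cumsum R i.+1.
  by move=> ip; rewrite cumsumS -[X in X < _]addn0 ltn_add2l R_gt0.
have incB j : j < su -> j * al < j.+1 * al by rewrite mulSn; lia.
have A0 : cumsum R 0 = 0 by rewrite /cumsum big_geq.
have crossA i : i < st ->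
    count (crosses (muln^~ al) (cumsum R i) (cumsum R i.+1)) (iota 0 su) <= t - n i.
  move=> ip; apply: leq_trans (count_crosses_spaced (m := t - n i - 1) (sig := al) _ _) _.
  - by move=> j _; rewrite mulSn addnC.
  - by rewrite cumsumS addKn R_le.
  - by have := n_lt ip; lia.
have crossB j : j < su -> count (crosses (cumsum R) (j * al) (j.+1 * al)) (iota 0 st) <= 2.
  by move=> js; apply: count_crosses_no_inside => [i /incA | i /R_not_inside].
have sum_k : \sum_(0 <= i < st) (t - n i) = \sum_(0 <= j < su) 2.
  rewrite sum_nat_subn => [|i /n_lt /ltnW //]; rewrite !sum_nat_const_nat sum_n; lia.
have [LA [LB [rowA rowB perm]]] :=
  padded_overlay incA incB A0 (erefl 0) R_total crossA crossB sum_k e0.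
exists LA, LB; split => //.
- by move=> i ip; have [s ss sp] := rowA i ip; rewrite ss cumsumS addKn.
- by move=> j js; have [s ss] := rowB j js; rewrite s ss mulSn addnK.
Qed.

Lemma nat_solution_of_leftovers : exists TT UU VV, nat_solution t 1 st su sv (2 * e + al) TT UU VV.
Proof.
have [LA [LB [rowA rowB perm]]] := leftover_overlay.
set D := 2 * e + al.
have row_sum i : i < st -> (t - n i) * e + R i + D * n i = t * e + tau.
  by move=> ip; rewrite -(R_tau ip) -{2}[t](subnK (ltnW (n_lt ip))) /D; ring.
have tau_total : st * tau = su * al + sv * (e + al).
  have -> : st * tau = \sum_(0 <= i < st) tau by rewrite sum_nat_const_nat subn0.
  rewrite -R_total -sum_n big_distrl -big_split /=.
  by apply: eq_big_nat => i /andP [_ ip]; rewrite R_tau.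
have V_entries : flatten [seq [:: D] | _ <- iota 0 sv] = nseq sv D.
  by rewrite -{2}(size_iota 0 sv); elim: (iota 0 sv) => //= _ s ->.
exists (fun i => LA i ++ nseq (n i) D), LB, (fun=> [:: D]); split => //.
- by rewrite /D; lia.
- move=> i ip; have [s ss sp] := rowA i ip.
  rewrite size_cat size_nseq s subnK ?(ltnW (n_lt ip)) // sumn_cat sumn_nseq ss row_sum //.
  rewrite all_cat sp all_nseq /D addn_gt0 al0 !orbT; split => //.
  rewrite (_ : _ * st = st * t * e + st * tau); last by ring.
  by rewrite cnt tau_total /D; ring.
- by move=> j _; rewrite /= addn0.
- apply: perm_trans (perm_flatten_cat _ _ _) _.
  by rewrite flatten_nseq [in X in nseq X]iota0E sum_n V_entries perm_cat2r.
Qed.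

End OneEntryRows.

Lemma nat_solution_v1_of_lengths t st su sv e al tau (n : nat -> nat) :
  0 < e -> 0 < al -> (forall i, i < st -> n i < t) -> \sum_(0 <= i < st) n i = sv ->
  st * t = su * 2 + sv -> st * tau = sv * (e + al) + su * al ->
  (forall i, i < st -> n i * (e + al) < tau <= n i * (e + al) + (t - n i - 1) * al) ->
  (forall i, i < st -> n i * (e + al) + al <= tau \/
     exists g, cumsum (fun l => tau - n l * (e + al)) i <= g * al
               <= cumsum (fun l => tau - n l * (e + al)) i.+1) ->
  exists TT UU VV, nat_solution t 1 st su sv (2 * e + al) TT UU VV.
Proof.
move=> e0 al0 n_lt sum_n cnt tau_total row_le row_grid.
set R := fun l => tau - n l * (e + al).
apply: (nat_solution_of_leftovers (n := n) (R := R))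
  => // [i /row_le /andP [h _] | i /row_le /andP [h _] | i /row_le /andP [h1 h2] | |
         i j /row_grid [h | [g h]]].
- by rewrite subn_gt0.
- by rewrite subnK // ltnW.
- by rewrite leq_subLR.
- rewrite /cumsum sum_nat_subn => [|i /row_le /andP [h _]]; last exact: ltnW.
  rewrite sum_nat_const_nat -big_distrl sum_n /= subn0 tau_total; lia.
- have RA : al <= R i by rewrite /R leq_subRL ?(leq_trans (leq_addr al _) h).
  by apply/negP => /andP [h1]; rewrite cumsumS mulSn; lia.
- exact: not_inside_of_grid h.
Qed.

Definition even_share sv st i := sv %/ st + (i < sv %% st).

Lemma sum_even_share sv st : 0 < st -> \sum_(0 <= i < st) even_share sv st i = sv.
Proof.
move=> st0; rewrite big_split /= sum_nat_const_nat subn0 [RHS](divn_eq sv st) mulnC.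
congr (_ + _); set r := sv %% st.
have lo : \sum_(0 <= i < r) (i < r : nat) = r.
  rewrite (eq_big_nat _ _ (F2 := fun=> 1)) => [|i /andP [_ ->] //].
  by rewrite sum_nat_const_nat subn0 muln1.
have hi : \sum_(r <= i < st) (i < r : nat) = 0.
  by rewrite big_nat_cond big1 // => i /andP [/andP [ri _] _]; rewrite ltnNge ri.
by rewrite (big_cat_nat _ (ltnW (ltn_pmod sv st0))) //= lo hi addn0.
Qed.

Lemma v1_spread_row_bounds t st su sv q r m :
  2 <= t -> 0 < st -> st * t = su * 2 + sv -> sv = q * st + r -> r < st -> sv <= (t - 2) * st ->
  (r = 0) \/ (q + 4 <= t) -> (m = q) \/ (m = q.+1 /\ 0 < r) ->
  m * (4 * (st * t) - 1) + (4 * (st * t) - 2) <= t * (4 * (su + sv) - 1) /\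
  t * (4 * (su + sv) - 1) <= m * (4 * (st * t) - 1) + (t - 1 - m) * (4 * (st * t) - 2).
Proof.
move=> t2 st0 cnt sv_E r_lt sv_le hc hm.
set P := st * t.
have P_ge : t <= P by rewrite /P leq_pmull.
have q_le : q + 2 <= t.
  have : q * st <= (t - 2) * st by lia.
  by rewrite leq_mul2r eqn0Ngt st0 /=; lia.
have tau_E : t * (4 * (su + sv) - 1) = 2 * (t * P) + 2 * (q * P) + 2 * (t * r) - t.
  have -> : 4 * (su + sv) = 2 * P + 2 * sv by rewrite /P cnt; lia.
  by rewrite mulnBr muln1 sv_E /P; congr (_ - _); ring.
have mulPB k c : k * (4 * P - c) = 4 * (k * P) - k * c by rewrite mulnBr mulnCA.
have mulP_le k l : k <= l -> k * P <= l * P by move=> kl; rewrite leq_mul2r kl orbT.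
have split_tP k : k < t -> (t - 1 - k) * P + k * P + P = t * P.
  by move=> kt; rewrite -[X in _ + X]mul1n -!mulnDl; congr (_ * _); lia.
have qP : q <= q * P by rewrite leq_pmulr //; lia.
have trP : t * r + t <= P by rewrite /P -mulnSr mulnC leq_mul2r r_lt orbT.
rewrite tau_E !mulPB; case: hm => [-> | [-> r0]].
- have := split_tP q ltac:(lia).
  case: hc => [r0 | q4].
  + rewrite r0 muln0.
    have : q + 2 = t \/ (q + 3) * P <= t * P.
      by case: (ltngtP (q + 2) t) => h; [right; apply: mulP_le; lia | lia | left].
    lia.
  + have := mulP_le _ _ q4; lia.
- case: hc => [r00 | q4]; first by lia.
  have := mulP_le _ _ q4; have : t <= t * r by rewrite leq_pmulr.
  have := split_tP q.+1 ltac:(lia); rewrite mulSn; lia.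
Qed.

Lemma nat_solution_v1_spread t st su sv :
  2 <= t -> 0 < st -> st * t = su * 2 + sv -> sv <= (t - 2) * st ->
  (sv %% st = 0) \/ (sv %/ st + 4 <= t) ->
  exists TT UU VV, nat_solution t 1 st su sv (4 * (st * t)) TT UU VV.
Proof.
move=> t2 st0 cnt sv_le hc.
set P := st * t; set q := sv %/ st; set r := sv %% st.
have share i : (even_share sv st i = q) \/ (even_share sv st i = q.+1 /\ 0 < r).
  by rewrite /even_share -/q -/r; case: ltnP => ir; [right; split; lia | left; lia].
have bounds i :=
  v1_spread_row_bounds t2 st0 cnt (divn_eq sv st) (ltn_pmod sv st0) sv_le hc (share i).
have P2 : 2 <= P by rewrite /P (leq_trans t2) ?leq_pmull.
(* With [e = 1] and [al = 4 P - 2] the total length [st * tau] of the T-rows,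
   [sv * (e + al) + su * al], is a multiple of [st]. *)
have e_al : 1 + (4 * P - 2) = 4 * P - 1 by lia.
rewrite (_ : 4 * P = 2 * 1 + (4 * P - 2)); last by lia.
apply: (nat_solution_v1_of_lengths (n := even_share sv st) (tau := t * (4 * (su + sv) - 1)))
  => //.
- by rewrite subn_gt0; lia.
- move=> i _; have [lo hi] := bounds i; move: (leq_trans lo hi).
  by rewrite leq_add2l -[X in X <= _]mul1n leq_mul2r => /orP []; lia.
- exact: sum_even_share.
- rewrite e_al mulnA -/P !mulnBr muln1.
  have : P * (4 * (su + sv)) = 4 * (su * P) + 4 * (sv * P) by ring.
  have : sv * (4 * P) = 4 * (sv * P) /\ su * (4 * P) = 4 * (su * P) by split; ring.
  have : sv <= sv * P /\ su <= su * P by rewrite !leq_pmulr //; lia.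
  by move: cnt; rewrite -/P; lia.
- move=> i _; have [lo hi] := bounds i; rewrite e_al subnAC; apply/andP; split => //.
  by apply: leq_trans lo; rewrite -addn1 leq_add2l; lia.
- by move=> i _; left; have [lo _] := bounds i; rewrite e_al.
Qed.

Lemma exists_tight_window w st : 0 < w -> w < st ->
  exists2 p, 0 < p & p.+1 * w < 2 * st <= p.+2 * w.
Proof.
move=> w0 w_lt; have [|m m0 /andP [lo hi]] := @exists_mul_window w (2 * st) w0; first by lia.
have m2 : 1 < m by case: m m0 lo hi => [|[|m]] // _ _; rewrite mul2n -addnn; lia.
by exists m.-1; rewrite ?prednK ?lo ?hi //; lia.
Qed.

Lemma v1_tight_total_length st su sv q r w y :
  st = w + r -> sv = q * st + r -> su * 2 = 3 * w + 2 * r ->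
  st * (q.+1 * (2 * st + w + y) + 2 * y) = sv * (2 * st + w + y) + su * (2 * (w + y)).
Proof. by move=> st_E sv_E su_E; rewrite sv_E [su * _]mulnA su_E st_E; ring. Qed.

Lemma nat_solution_v1_tight t st su sv :
  0 < st -> st * t = su * 2 + sv -> sv %/ st + 3 = t -> 0 < sv %% st ->
  exists TT UU VV, nat_solution t 1 st su sv (4 * st) TT UU VV.
Proof.
move=> st0 cnt hq r0.
have sv_E := divn_eq sv st; set q := sv %/ st in hq sv_E; set r := sv %% st in r0 sv_E.
have r_lt : r < st by exact: ltn_pmod.
set w := st - r; have st_E : st = w + r by rewrite /w subnK // ltnW.
have [p p0 /andP [p_lo p_hi]] : exists2 p, 0 < p & p.+1 * w < 2 * st <= p.+2 * w.
  by apply: exists_tight_window; rewrite /w; lia.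
have su_E : su * 2 = 3 * w + 2 * r.
  have : st * t = q * st + 3 * st by rewrite -hq; ring.
  by lia.
(* Row [i] of T gets [q.+1] or [q] entries [D], leaving lengths [2 y] and [2 y + B];
   with [y = p * w] some multiple of [al] falls into every leftover of length [2 y]. *)
set y := p * w; set B := 2 * st + w + y; set al := 2 * (w + y).
set tau := q.+1 * B + 2 * y.
have y0 : 0 < y by rewrite muln_gt0 p0 subn_gt0.
have wy_lt : w + y < 2 * st by rewrite /y -mulSn.
have st_le : 2 * st <= w + (w + y) by rewrite /y -!mulSn.
rewrite (_ : 4 * st = 2 * (2 * st - (w + y)) + al); last by rewrite /al; lia.
have e_al : 2 * st - (w + y) + al = B by rewrite /al /B; lia.
have n_E i : even_share sv st i = if i < r then q.+1 else q.
  by rewrite /even_share -/q -/r; case: ltnP; rewrite ?addn1 ?addn0.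
apply: (nat_solution_v1_of_lengths (n := even_share sv st) (tau := tau)); rewrite ?e_al //.
- by lia.
- by rewrite /al; lia.
- by move=> i _; rewrite n_E -hq; case: ifP; lia.
- exact: sum_even_share.
- exact: v1_tight_total_length st_E sv_E su_E.
- move=> i _; rewrite n_E -hq /tau; case: ifP => _.
  + by rewrite (_ : q + 3 - q.+1 - 1 = 1) ?mul1n /al; lia.
  + by rewrite (_ : q + 3 - q - 1 = 2) /al ?mulSn /B; lia.
- move=> i _; rewrite n_E /tau; case: ifP => ir.
  + right; set R := fun l => q.+1 * B + 2 * y - even_share sv st l * B.
    rewrite !(@cumsum_const R (2 * y)) => [|l li|l li]; last 2 first.
    1, 2: by rewrite /R n_E ifT ?addKn //; lia.
    by apply: (exists_grid_point (p := p)); rewrite /al /y; ring.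
  + by left; rewrite mulSn /al /B; lia.
Qed.

Lemma exists_nat_solution t v st su sv :
  2 <= t -> 0 < v -> (v = 1 -> sv <= (t - 2) * st) -> 0 < st -> 0 < su ->
  su * v.+1 + sv * v = st * t ->
  exists D TT UU VV, nat_solution t v st su sv D TT UU VV.
Proof.
move=> t2 v0 sv_le st0 su0 cnt; case: (ltnP 1 v) => [v2 | v1].
- case: (boolP [&& v == 2, t == 2 & 0 < sv]) => [/and3P [/eqP v_E /eqP t_E sv0] | hc].
  + by subst v t; apply: nat_solution_t2_v2; rewrite // cnt.
  + by apply: nat_solution_spread => //; move: hc; lia.
- have v_E : v = 1 by lia.
  subst v; have {}sv_le := sv_le erefl; have {}cnt : st * t = su * 2 + sv by rewrite -cnt muln1.
  have q_lt : 0 < sv %% st -> sv %/ st < t - 2.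
    by move=> r0; rewrite -(ltn_pmul2r st0); have := divn_eq sv st; lia.
  case: (posnP (sv %% st)) => [r0 | r0].
  + by exists (4 * (st * t)); apply: nat_solution_v1_spread => //; left.
  + case: (leqP (sv %/ st + 4) t) => q4.
    * by exists (4 * (st * t)); apply: nat_solution_v1_spread => //; right.
    * by exists (4 * st); apply: nat_solution_v1_tight => //; lia.
Qed.

(** * From integer solutions to real matrices *)
Local Open Scope ring_scope.

Definition mx_of_seqs (R : Type) (m n : nat) (G : nat -> seq nat) (phi : nat -> R) :
  'M[R]_(m, n) := \matrix_(i, j) phi (nth 0%N (G i) j).

Lemma mx_entries_of_seqs (R : Type) (m n : nat) (G : nat -> seq nat) (phi : nat -> R) :
  (forall i, (i < m)%N -> size (G i) = n) ->
  mx_entries (mx_of_seqs m n G phi) = map phi (flatten [seq G i | i <- iota 0 m]).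
Proof.
move=> sizeG; have ord_map (T : Type) k (F : nat -> T) :
    [seq F (nat_of_ord j) | j <- enum 'I_k] = map F (iota 0 k).
  by rewrite -val_enum_ord -map_comp.
rewrite /mx_entries map_flatten -map_comp -ord_map; congr flatten; apply: eq_map => i /=.
rewrite (eq_map (fun j => mxE _ _ i j)) /= (ord_map _ _ (fun j => phi (nth 0%N (G i) j))).
by rewrite (map_comp phi) -(sizeG i (ltn_ord i)) map_nth_iota0 ?take_size.
Qed.

Lemma row_sum_of_seqs (R : nmodType) m n (G : nat -> seq nat) (phi : nat -> R) (i : 'I_m) :
  size (G i) = n -> \sum_(j < n) mx_of_seqs m n G phi i j = \sum_(x <- G i) phi x.
Proof.
move=> sizeG; under eq_bigr do rewrite mxE.
by rewrite (big_nth 0%N) sizeG big_mkord.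
Qed.

Lemma sum_affine (R : fieldType) (s : seq nat) (d g D : R) :
  \sum_(x <- s) (d + g * x%:R / D) = (size s)%:R * d + g * (sumn s)%:R / D.
Proof.
elim: s => [|a s IH]; first by rewrite big_nil /= !mul0r mulr0 mul0r addr0.
by rewrite big_cons IH /= !natrD; ring.
Qed.

Section Realization.
Variables (R : realType) (t u v st su sv D : nat) (TT UU VV : nat -> seq nat) (xt xu xv : rat).
Hypotheses (sol : nat_solution t v st su sv D TT UU VV) (u_E : u = v.+1) (st0 : (0 < st)%N)
  (cnt : (su * u + sv * v = st * t)%N) (sums : su%:R * xu + sv%:R * xv = st%:R * xt)
  (gap : v%:R * xu < u%:R * xv).

Let XT : R := ratr xt.
Let XU : R := ratr xu.
Let XV : R := ratr xv.
Let g : R := u%:R * XV - v%:R * XU.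
(* An integer [n] of the normalised problem becomes the entry [(xu - xv) + g n / D]. *)
Let phi (n : nat) : R := (XU - XV) + g * n%:R / D%:R.

Let cntR : su%:R * u%:R + sv%:R * v%:R = st%:R * t%:R :> R.
Proof. by rewrite -!natrM -natrD cnt. Qed.

Let sumsR : su%:R * XU + sv%:R * XV = st%:R * XT.
Proof. by rewrite /XU /XV /XT -!(ratr_nat R) -!rmorphM -rmorphD sums. Qed.

Let g_gt0 : 0 < g.
Proof. by rewrite subr_gt0 /XU /XV -!(ratr_nat R) -!rmorphM ltr_rat. Qed.

Let D_neq0 : D%:R != 0 :> R.
Proof. by case: sol => D0 _ _ _ _; rewrite pnatr_eq0 -lt0n. Qed.

Let sum_phi (s : seq nat) :
  \sum_(x <- s) phi x = (size s)%:R * (XU - XV) + g * (sumn s)%:R / D%:R.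
Proof. exact: sum_affine. Qed.

Lemma feasible_of_nat_solution :
  exists (T : 'M[R]_(st, t)) (U : 'M[R]_(su, u)) (V : 'M[R]_(sv, v)),
    feasible xt xu xv T U V /\ forall i j, ratr (xu - xv) < T i j.
Proof.
have [_ rowT rowU rowV perm] := sol.
exists (mx_of_seqs st t TT phi), (mx_of_seqs su u UU phi), (mx_of_seqs sv v VV phi).
split; first split.
- move=> i; have [s ss _] := rowT i (ltn_ord i).
  rewrite row_sum_of_seqs // sum_phi s -/XT.
  have st0R : st%:R != 0 :> R by rewrite pnatr_eq0 -lt0n.
  have sE : (sumn (TT i))%:R = (su + sv)%:R * D%:R / st%:R :> R.
    by rewrite -natrM -ss natrM mulfK.
  apply: (mulfI st0R); rewrite -sumsR mulrDr mulrA -cntR sE.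
  rewrite (_ : _ * (g * _ / _) = g * (su + sv)%:R); last by field; apply/andP.
  by rewrite /g u_E -addn1 !natrD; ring.
- move=> i; have [s ss] := rowU i (ltn_ord i).
  by rewrite row_sum_of_seqs ?s ?u_E // sum_phi s ss mulfK // /g u_E -addn1 natrD; ring.
- move=> i; have [s ss] := rowV i (ltn_ord i).
  by rewrite row_sum_of_seqs // sum_phi s ss mulfK // /g u_E -addn1 natrD; ring.
- have sizeT i : (i < st)%N -> size (TT i) = t by case/rowT.
  have sizeU i : (i < su)%N -> size (UU i) = u by rewrite u_E; case/rowU.
  have sizeV i : (i < sv)%N -> size (VV i) = v by case/rowV.
  by rewrite !mx_entries_of_seqs // -map_cat perm_map.
- move=> i j; have [s _ pos] := rowT i (ltn_ord i).
  have n0 : (0 < nth 0 (TT i) j)%N by apply: (allP pos); rewrite mem_nth ?s.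
  by rewrite mxE /phi rmorphB ltrDl divr_gt0 ?mulr_gt0 ?ltr0n //; case: sol.
Qed.
End Realization.

Lemma min_entry_values_bounded (R : realType) t u v st su sv xt xu xv :
  (0 < st)%N -> (0 < t)%N -> has_ubound (min_entry_values R t u v st su sv xt xu xv).
Proof.
move=> st0 t0; exists (ratr xt / t%:R) => y [T [U [V [[rowT _ _ _] [_ ymin]]]]].
rewrite ler_pdivlMr ?ltr0n // -(rowT (Ordinal st0)) mulr_natr -[t in y *+ t]card_ord -sumr_const.
by apply: ler_sum => j _; exact: ymin.
Qed.

Lemma lt_f_dap_of_feasible (R : realType) t u v st su sv xt xu xv
    (T : 'M[R]_(st, t)) (U : 'M[R]_(su, u)) (V : 'M[R]_(sv, v)) (c : R) :
  (0 < st)%N -> (0 < t)%N -> feasible xt xu xv T U V -> (forall i j, c < T i j) ->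
  c < f_dap R t u v st su sv xt xu xv.
Proof.
move=> st0 t0 feas above.
have [[i j] _ min_ij] :=
  arg_minP (fun k : 'I_st * 'I_t => T k.1 k.2) (i0 := (Ordinal st0, Ordinal t0)) (P := xpredT) isT.
apply: lt_le_trans (above i j) _; apply: ub_le_sup; first exact: min_entry_values_bounded.
exists T, U, V; split => //; split; first by exists i, j.
by move=> i' j'; exact: (min_ij (i', j')).
Qed.

Theorem lemma14 (R : realType) (t u v st su sv : nat) (xt xu xv : rat) :
  is_3MDAP t u v st su sv xt xu xv ->
  u = (v + 1)%N ->
  (ratr (xu - xv) : R) < f_dap R t u v st su sv xt xu xv.
Proof.
move=> [t2 [u2 [v1 [v1_le [st0 [su0 [cnt [sums gap]]]]]]]]; rewrite addn1 => u_E.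
have [D [TT [UU [VV sol]]]] : exists D TT UU VV, nat_solution t v st su sv D TT UU VV.
  apply: exists_nat_solution; rewrite -?u_E //.
  by move=> v_E; have := v1_le v_E; rewrite v_E mul1n.
have gap_uv : v%:R * xu < u%:R * xv.
  have u0 : (0 < u)%N by rewrite u_E.
  move: gap; rewrite ltr_pdivrMr ?ltr0n // mulrAC ltr_pdivlMr ?ltr0n //.
  by rewrite mulrC [xv * _]mulrC.
have [T [U [V [feas above]]]] := feasible_of_nat_solution R sol u_E st0 cnt sums gap_uv.
exact: lt_f_dap_of_feasible (ltnW t2) feas above.
Qed.
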